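(* Let $X$ be a path-connected topological space, $Y\subset X$ a discrete subset, $b\in Y$, $G$ a group, and for each $y\in Y$ let $s_y$ be a path from $b$ to $y$, with $s_b$ constant. For $z\in Z^1(X,b)$, the cohomology class in $H^1(X,Y)$ of $\varepsilon_s(z)\bullet z$ depends only on the family $s=(s_y)$ and on the cohomology class of $z$ in $H^1(X,b)$.
   Context: Conventions: a path in $W$ is a continuous map $[0,1]\to W$; $P(W)$ is the set of paths; $p\cdot q$ is concatenation; homotopies of paths are relative to $\{0,1\}$. $G$ has unit $1$. For $Y\subset W$: a $0$-cochain of $(W,Y)$ is $c\colon W\to G$ with $c|_Y=1$; these form a group $C^0(W,Y)$ under pointwise multiplication, and act on maps $u\colon P(W)\to G$ by $(c\bullet u)(p)=c(p(0))u(p)c(p(1))^{-1}$. A $1$-cochain of $(W,Y)$ is $u\colon P(W)\to G$ with $u(p)=1$ for paths with image in $Y$; a cocycle satisfies $u(p)=u(q)$ for homotopic $p,q$ and $u(p\cdot q)=u(p)u(q)$ when defined; $Z^1(W,Y)$ is the set of cocycles and $H^1(W,Y)$ the set of $C^0(W,Y)$-orbits; $(W,b)=(W,\{b\})$. $C^0(Y,b)$ (maps $Y\to G$ equal to $1$ at $b$) is identified with the subgroup of $C^0(X,b)$ of cochains equal to $1$ on $X\setminus Y$. For $z\in Z^1(X,b)$, $\varepsilon_s(z)\in C^0(Y,b)$ is $y\mapsto z(s_y)$. (Since $Y$ is discrete, $\varepsilon_s(z)\bullet z\in Z^1(X,Y)$.) *)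

From HB Require Import structures.
From mathcomp Require Import all_boot all_order all_algebra.
From mathcomp Require Import all_classical all_reals all_analysis.
From mathcomp Require Import Rstruct Rstruct_topology.
From Stdlib Require Import Rdefinitions.
Set Implicit Arguments. Unset Strict Implicit. Unset Printing Implicit Defensive.
Import Order.TTheory GRing.Theory Num.Theory.
Local Open Scope classical_set_scope.
Local Open Scope ring_scope.

Record group := Group {
  gcar :> Type;
  gmul : gcar -> gcar -> gcar;
  gone : gcar;
  ginv : gcar -> gcar;
  gmulA : forall x y z, gmul x (gmul y z) = gmul (gmul x y) z;
  gmul1 : forall x, gmul gone x = x;
  gmulr1 : forall x, gmul x gone = x;
  gmulV : forall x, gmul (ginv x) x = gone;
  gmulrV : forall x, gmul x (ginv x) = gone }.

Definition unit_interval : set R := `[0, 1]%classic.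

Section Defs.
Context (X : topologicalType).

(* A path is a map [0,1] -> X; represented as a function R -> X that is
   continuous on [0,1] (values outside [0,1] are irrelevant). *)
Definition is_path (p : R -> X) : Prop := {within unit_interval, continuous p}.

Definition path_connected : Prop :=
  forall x y : X, exists p, is_path p /\ p 0 = x /\ p 1 = y.

Definition discrete_subset (Y : set X) : Prop :=
  forall y, Y y -> exists U, nbhs y U /\ U `&` Y = [set y].

Definition concat (p q : R -> X) : R -> X :=
  fun t => if (t <= 2^-1) then p (2 * t) else q (2 * t - 1).

Definition homotopic (p q : R -> X) : Prop :=
  exists H : R * R -> X,
    {within unit_interval `*` unit_interval, continuous H} /\
    (forall t, unit_interval t -> H (0, t) = p t /\ H (1, t) = q t) /\
    (forall s, unit_interval s -> H (s, 0) = p 0 /\ H (s, 1) = p 1).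

Context (G : group).

Definition cochain0 (Y : set X) (c : X -> G) : Prop := forall y, Y y -> c y = gone G.

Definition cact (c : X -> G) (u : (R -> X) -> G) : (R -> X) -> G :=
  fun p => gmul (gmul (c (p 0)) (u p)) (ginv (c (p 1))).

Definition cocycle (Y : set X) (u : (R -> X) -> G) : Prop :=
  [/\ (forall p, is_path p -> p @` unit_interval `<=` Y -> u p = gone G),
      (forall p q, is_path p -> is_path q -> homotopic p q -> u p = u q) &
      (forall p q, is_path p -> is_path q -> p 1 = q 0 ->
         u (concat p q) = gmul (u p) (u q))].

Definition cohomologous (Y : set X) (u v : (R -> X) -> G) : Prop :=
  exists c, cochain0 Y c /\ forall p, is_path p -> v p = cact c u p.

(* epsilon_s(z) in C^0(Y,b), viewed in C^0(X,b) (equal to 1 off Y) *)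
Definition eps (Y : set X) (s : X -> R -> X) (z : (R -> X) -> G) : X -> G :=
  fun x => if x \in Y then z (s x) else gone G.

End Defs.

(* If [z' = c . z] with [c b = 1], then [z' (s y) = z (s y) c(y)^-1] for y in Y,
   so the cochain [eps s z' * c * (eps s z)^-1] carries [eps s z . z] to
   [eps s z' . z'] and is trivial on Y. *)
From mathcomp Require Import all_boot all_order all_algebra.
From mathcomp Require Import all_classical all_reals all_analysis.
From mathcomp Require Import Rstruct Rstruct_topology.
From Stdlib Require Import Rdefinitions.
Local Open Scope classical_set_scope.
Local Open Scope ring_scope.

Lemma gmulVK (G : group) (a x : G) : gmul (gmul a (ginv x)) x = a.
Proof. by rewrite -gmulA gmulV gmulr1. Qed.

Lemma ginv_uniq (G : group) (a b : G) : gmul a b = gone G -> ginv a = b.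
Proof.
move=> ab1; have := congr1 (gmul (ginv a)) ab1.
by rewrite gmulA gmulV gmul1 gmulr1 => ->.
Qed.

Lemma ginvM (G : group) (a b : G) : ginv (gmul a b) = gmul (ginv b) (ginv a).
Proof. by apply: ginv_uniq; rewrite gmulA -(gmulA a) gmulrV gmulr1 gmulrV. Qed.

Section CochainAction.
Context {X : topologicalType} {G : group}.
Implicit Types (c d : X -> G) (u : (R -> X) -> G).

Definition cmul c d : X -> G := fun x => gmul (c x) (d x).

Definition cdiv c d : X -> G := fun x => gmul (c x) (ginv (d x)).

Lemma cdivK c d : cmul (cdiv c d) d = c.
Proof. by apply: funext => x; rewrite /cmul /cdiv gmulVK. Qed.

Lemma cactM c d u p : cact c (cact d u) p = cact (cmul c d) u p.
Proof. by rewrite /cact /cmul ginvM !gmulA. Qed.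

Lemma eps_cohomologous {Y : set X} {b : X} {s : X -> R -> X} {c u v} :
  cochain0 [set b] c -> (forall p, is_path p -> v p = cact c u p) ->
  (forall y, Y y -> is_path (s y) /\ s y 0 = b /\ s y 1 = y) ->
  forall y, Y y -> eps Y s v y = cdiv (eps Y s u) c y.
Proof.
move=> cb1 uv hs y Yy; have [sy_path [sy0 sy1]] := hs y Yy.
by rewrite /eps /cdiv (mem_set Yy) (uv _ sy_path) /cact sy0 sy1 cb1 // gmul1.
Qed.

End CochainAction.

Theorem lemma6p7 (X : topologicalType) (Y : set X) (b : X) (G : group)
  (s : X -> R -> X) :
  path_connected X -> discrete_subset Y -> Y b ->
  (forall y, Y y -> is_path (s y) /\ s y 0 = b /\ s y 1 = y) ->
  (forall t, unit_interval t -> s b t = b) ->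
  forall z z' : (R -> X) -> G,
    cocycle [set b] z -> cocycle [set b] z' ->
    cohomologous [set b] z z' ->
    cohomologous Y (cact (eps Y s z) z) (cact (eps Y s z') z').
Proof.
move=> _ _ _ hs _ z z' _ _ [c [cb1 zz']].
have eps_z' := eps_cohomologous cb1 zz' hs.
exists (cdiv (cmul (eps Y s z') c) (eps Y s z)); split.
  by move=> y Yy; rewrite /cdiv /cmul eps_z' // /cdiv gmulVK gmulrV.
move=> p p_path; rewrite cactM cdivK -cactM.
by rewrite [in LHS]/cact [in RHS]/cact (zz' _ p_path).
Qed.
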